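(* For all natural numbers $n\geq 1$ and all $m\geq 2$, \[a_m(n)=a_{m-1}(2n,n).\]
   Context: For $m\geq 1$, $a_m(n)$ is the number of partitions of $n$ in which the smallest part occurs at least $m$ times, and $a_m(N,k)$ is the number of partitions of $N$ in which the smallest part occurs at least $m$ times and the largest part minus the smallest part equals $k$. *)

From mathcomp Require Import all_boot.
Set Implicit Arguments. Unset Strict Implicit. Unset Printing Implicit Defensive.

(* A partition of N is encoded by its multiplicity vector:
   [t : {ffun 'I_N -> 'I_N.+1}], where [t i] is the number of times the
   part [i.+1] occurs (parts range over 1..N, each multiplicity is <= N). *)
Definition mult_vec (N : nat) := {ffun 'I_N -> 'I_N.+1}.

Definition is_partition (N : nat) (t : mult_vec N) : bool :=
  \sum_(i < N) i.+1 * t i == N.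

Definition smallest_occurs_atleast (N m : nat) (t : mult_vec N) : bool :=
  [exists i : 'I_N, [&& 0 < t i, [forall j : 'I_N, (j < i) ==> (t j == 0 :> nat)]
                     & m <= t i]].

Definition largest_minus_smallest (N k : nat) (t : mult_vec N) : bool :=
  [exists i : 'I_N, exists j : 'I_N,
     [&& 0 < t i, 0 < t j,
         [forall l : 'I_N, (0 < t l) ==> (i <= l <= j)]
       & j.+1 - i.+1 == k]].

Definition a_m (m n : nat) : nat :=
  #|[set t : mult_vec n | is_partition t && smallest_occurs_atleast m t]|.

Definition a_mk (m N k : nat) : nat :=
  #|[set t : mult_vec N | [&& is_partition t, smallest_occurs_atleast m t
                            & largest_minus_smallest k t]]|.

From mathcomp Require Import all_boot zify.
Set Implicit Arguments. Unset Strict Implicit. Unset Printing Implicit Defensive.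

(* Replacing one copy of the smallest part s of a partition of n by the part
   s + n gives a partition of 2n in which s is still the smallest part (it
   occurred at least twice) and s + n is the largest one, since all old parts
   are at most n.  Conversely, replacing the largest part s + n of such a
   partition of 2n by s leaves a total of n, which forces every part to be at
   most n.  They are carried out on
   multiplicity functions nat -> nat, index k standing for the part k + 1. *)

Lemma card_in_bij (T1 T2 : finType) (A : {set T1}) (B : {set T2})
    (f : T1 -> T2) (g : T2 -> T1) :
  {in A, forall x, f x \in B} -> {in B, forall y, g y \in A} ->
  {in A, cancel f g} -> {in B, cancel g f} -> #|A| = #|B|.
Proof.
move=> fB gA fK gK; rewrite -(card_in_imset (can_in_inj fK)).
suff -> : f @: A = B by [].
apply/setP => y; apply/imsetP/idP => [[x xA ->]|yB]; first exact: fB.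
by exists (g y); rewrite ?gK ?gA.
Qed.

Definition weight (M : nat) (f : nat -> nat) : nat := \sum_(k < M) k.+1 * f k.

Definition is_mult_partition (N : nat) (f : nat -> nat) : Prop :=
  (forall k, N <= k -> f k = 0) /\ weight N f = N.

Lemma weight_widen M M' f :
  M <= M' -> (forall k, M <= k -> f k = 0) -> weight M' f = weight M f.
Proof.
move=> leMM' f0; rewrite /weight (big_ord_widen _ (fun k => k.+1 * f k) leMM').
rewrite [LHS](bigID (fun k : 'I_M' => k < M)) /= [X in _ + X]big1 ?addn0 // => k.
by rewrite -leqNgt => /f0 ->; rewrite muln0.
Qed.

Lemma term_le_weight M f k : k < M -> k.+1 * f k <= weight M f.
Proof. by move=> ltkM; rewrite /weight (bigD1 (Ordinal ltkM)) //= leq_addr. Qed.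

Lemma pos_lt_weight M f k :
  (forall k, M <= k -> f k = 0) -> 0 < f k -> k < weight M f.
Proof.
move=> f0; case: (ltnP k M) => [ltkM|/f0 ->] // fk_gt0.
exact: leq_trans (leq_pmulr _ fk_gt0) (term_le_weight f ltkM).
Qed.

Definition move_part (f : nat -> nat) (a b k : nat) : nat :=
  f k - (k == a) + (k == b).

Lemma move_partK f a b : 0 < f a -> move_part (move_part f a b) b a =1 f.
Proof. by move=> fa_gt0 k; rewrite /move_part; case: eqP => [->|_]; lia. Qed.

Lemma move_part_out M f a b : b < M -> (forall k, M <= k -> f k = 0) ->
  forall k, M <= k -> move_part f a b k = 0.
Proof. by move=> ltbM f0 k leMk; rewrite /move_part f0 //; lia. Qed.

Lemma weight_move_part M f a b : a < M -> b < M -> 0 < f a ->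
  weight M (move_part f a b) + a.+1 = weight M f + b.+1.
Proof.
move=> ltaM ltbM fa_gt0.
have weight_pt c : c < M -> \sum_(k < M) k.+1 * (k == c :> nat) = c.+1.
  move=> ltcM; rewrite (bigD1 (Ordinal ltcM)) //= eqxx muln1 big1 ?addn0 // => k.
  by rewrite -val_eqE /= => /negbTE ->; rewrite muln0.
rewrite -{1}(weight_pt a ltaM) -(weight_pt b ltbM) /weight -!big_split.
apply: eq_bigr => k _ /=; rewrite -!mulnDr /move_part; congr (_ * _).
by case: eqP => [->|_]; lia.
Qed.

Definition least_pos (f : nat -> nat) (s : nat) : Prop :=
  0 < f s /\ forall j, j < s -> f j = 0.

Lemma eq_least_pos f g s : f =1 g -> least_pos f s -> least_pos g s.
Proof. by move=> efg [fs_gt0 f0]; split=> [|j /f0]; rewrite -efg. Qed.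

Lemma least_pos_move_part f a b s : least_pos f s -> s <= a -> s <= b ->
  0 < move_part f a b s -> least_pos (move_part f a b) s.
Proof.
by move=> [_ f0] lesa lesb gs_gt0; split=> // j ltjs; rewrite /move_part f0 //; lia.
Qed.

Lemma least_pos_le f s l : least_pos f s -> 0 < f l -> s <= l.
Proof. by move=> [_ f0] fl_gt0; rewrite leqNgt; apply: contraTN fl_gt0 => /f0 ->. Qed.

Section ShiftExtremePart.
Variables n m : nat.

Lemma raise_smallest_part f s : 0 < n -> 1 < m ->
  is_mult_partition n f -> least_pos f s -> m <= f s ->
  [/\ is_mult_partition n.*2 (move_part f s (s + n)),
      least_pos (move_part f s (s + n)) s,
      m.-1 <= move_part f s (s + n) s
    & 0 < move_part f s (s + n) (s + n)].
Proof.
move=> n_gt0 m_gt1 [f0 wf] least le_m; have [fs_gt0 _] := least.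
have ltsn : s < n by rewrite -wf; apply: pos_lt_weight.
have f0' : forall k, n.*2 <= k -> f k = 0 by move=> k le2nk; apply: f0; lia.
split.
- split; first by apply: move_part_out f0'; lia.
  have [lts2n ltsn2] : s < n.*2 /\ s + n < n.*2 by lia.
  have := weight_move_part lts2n ltsn2 fs_gt0.
  rewrite (weight_widen _ f0) ?wf; lia.
- by apply: least_pos_move_part => //; rewrite /move_part; lia.
- rewrite /move_part; lia.
- rewrite /move_part f0 ?leq_addl //; lia.
Qed.

Lemma lower_largest_part g s :
  is_mult_partition n.*2 g -> least_pos g s -> m.-1 <= g s -> 0 < g (s + n) ->
  [/\ is_mult_partition n (move_part g (s + n) s),
      least_pos (move_part g (s + n) s) s
    & m <= move_part g (s + n) s s].
Proof.
move=> [g0 wg] least le_m gsn_gt0; have [gs_gt0 _] := least.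
have ltsn2 : s + n < n.*2 by rewrite -wg; apply: pos_lt_weight.
set f := move_part g (s + n) s.
have f0' : forall k, n.*2 <= k -> f k = 0 by apply: move_part_out g0; lia.
have wf : weight n.*2 f = n.
  have lts2n : s < n.*2 by lia.
  have := weight_move_part ltsn2 lts2n gsn_gt0.
  rewrite wg -/f; lia.
(* the remaining weight n bounds every index carrying a part *)
have f0 : forall k, n <= k -> f k = 0.
  move=> k lenk; apply/eqP; rewrite eqn0Ngt; apply/negP.
  by move/(pos_lt_weight f0'); lia.
split.
- by split=> //; rewrite -(weight_widen (M' := n.*2) _ f0) // -addnn leq_addr.
- by apply: least_pos_move_part => //; rewrite /f /move_part; lia.
- rewrite /f /move_part; lia.
Qed.

End ShiftExtremePart.

Section Encoding.
Variable N : nat.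
Implicit Types (t : mult_vec N) (f : nat -> nat).

Definition mult t (k : nat) : nat := if insub k is Some i then t i else 0.

Lemma mult_ord t (i : 'I_N) : mult t i = t i.
Proof. by rewrite /mult valK. Qed.

Lemma mult_out t k : N <= k -> mult t k = 0.
Proof. by move=> leNk; rewrite /mult insubN // -leqNgt. Qed.

Lemma mult_pos_lt t k : 0 < mult t k -> k < N.
Proof. by case: (ltnP k N) => // /(mult_out t) ->. Qed.

Lemma mult_inj t1 t2 : mult t1 =1 mult t2 -> t1 = t2.
Proof. by move=> e; apply/ffunP => i; apply: val_inj; rewrite /= -!mult_ord e. Qed.

Definition of_mult f : mult_vec N := [ffun i : 'I_N => inord (f i)].

Lemma mult_of_mult f : is_mult_partition N f -> mult (of_mult f) =1 f.
Proof.
move=> [f0 wf] k; case: (ltnP k N) => [ltkN|leNk]; last by rewrite mult_out ?f0.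
rewrite (mult_ord _ (Ordinal ltkN)) ffunE inordK // ltnS -[X in _ <= X]wf.
exact: leq_trans (leq_pmull _ (ltn0Sn k)) (term_le_weight f ltkN).
Qed.

Lemma is_partitionP t : reflect (is_mult_partition N (mult t)) (is_partition t).
Proof.
have -> : is_partition t = (weight N (mult t) == N).
  by congr (_ == _); apply: eq_bigr => i _; rewrite mult_ord.
by apply: (iffP eqP) => [wt|[]//]; split=> // k; apply: mult_out.
Qed.

Lemma is_partition_of_mult f : is_mult_partition N f -> is_partition (of_mult f).
Proof.
move=> part; have [_ wf] := part; apply/is_partitionP; split; first exact: mult_out.
by rewrite -[RHS]wf; apply: eq_bigr => i _; rewrite mult_of_mult.
Qed.

Lemma smallest_occurs_atleastP m t :
  smallest_occurs_atleast m t <-> exists2 s, least_pos (mult t) s & m <= mult t s.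
Proof.
split=> [/existsP[i /and3P[ti_gt0 /forallP t0 le_m]]|[s [ts_gt0 t0] le_m]].
  exists (nat_of_ord i); rewrite ?mult_ord //; split=> [|j ltji]; first by rewrite mult_ord.
  have ltjN := ltn_trans ltji (ltn_ord i).
  by have /implyP/(_ ltji)/eqP := t0 (Ordinal ltjN); rewrite -mult_ord.
apply/existsP; exists (Ordinal (mult_pos_lt ts_gt0)); rewrite -mult_ord ts_gt0 le_m andbT /=.
by apply/forallP => j; apply/implyP => ltjs; rewrite -mult_ord t0.
Qed.

Lemma largest_minus_smallestP k t s : least_pos (mult t) s ->
  largest_minus_smallest k t <->
  0 < mult t (s + k) /\ forall l, 0 < mult t l -> l <= s + k.
Proof.
move=> least; have [ts_gt0 _] := least; split.
  case/existsP=> i /existsP[j /and4P[ti_gt0 tj_gt0 /forallP between /eqP dji]].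
  have between_ij l : 0 < mult t l -> i <= l <= j.
    by move=> tl_gt0; have := between (Ordinal (mult_pos_lt tl_gt0)); rewrite -mult_ord tl_gt0.
  have /andP[lesi _] := between_ij s ts_gt0.
  have leis : s <= i by apply: least_pos_le least _; rewrite mult_ord.
  have /andP[leij _] : i <= j <= j by apply: between_ij; rewrite mult_ord.
  have -> : s + k = j by lia.
  by split=> [|l /between_ij /andP[]]; rewrite ?mult_ord.
move=> [tsk_gt0 le_sk]; apply/existsP; exists (Ordinal (mult_pos_lt ts_gt0)).
apply/existsP; exists (Ordinal (mult_pos_lt tsk_gt0)).
rewrite -!mult_ord /= ts_gt0 tsk_gt0 subSS addKn eqxx andbT /=.
apply/forallP => l; apply/implyP; rewrite -mult_ord => tl_gt0.
by rewrite le_sk // andbT (least_pos_le least).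
Qed.

Definition smallest_index t : nat := find (fun k => 0 < mult t k) (iota 0 N).

Lemma smallest_indexE t s : least_pos (mult t) s -> smallest_index t = s.
Proof.
move=> [ts_gt0 t0]; have ltsN := mult_pos_lt ts_gt0.
have has_pos : has (fun k => 0 < mult t k) (iota 0 N).
  by apply/hasP; exists s; rewrite ?mem_iota.
have ltiN : smallest_index t < N by rewrite -(size_iota 0 N) -has_find.
have := nth_find 0 has_pos; rewrite nth_iota // add0n -/(smallest_index t).
case: (ltngtP (smallest_index t) s) => [/t0 -> //|ltsi _|//].
by have := before_find 0 ltsi; rewrite nth_iota // add0n ts_gt0.
Qed.

End Encoding.

Definition raise_smallest n (t : mult_vec n) : mult_vec n.*2 :=
  of_mult n.*2 (move_part (mult t) (smallest_index t) (smallest_index t + n)).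

Definition lower_largest n (u : mult_vec n.*2) : mult_vec n :=
  of_mult n (move_part (mult u) (smallest_index u + n) (smallest_index u)).

Section Bijection.
Variables n m : nat.
Hypotheses (n_gt0 : 0 < n) (m_gt1 : 1 < m).

Let A := [set t : mult_vec n | is_partition t && smallest_occurs_atleast m t].
Let B := [set u : mult_vec n.*2 | [&& is_partition u, smallest_occurs_atleast m.-1 u
                                    & largest_minus_smallest n u]].

Lemma memAP t : t \in A ->
  [/\ is_mult_partition n (mult t), least_pos (mult t) (smallest_index t)
    & m <= mult t (smallest_index t)].
Proof.
rewrite inE => /andP[/is_partitionP part /smallest_occurs_atleastP[s least le_m]].
by rewrite (smallest_indexE least).
Qed.

Lemma memBP u : u \in B ->
  [/\ is_mult_partition n.*2 (mult u), least_pos (mult u) (smallest_index u),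
      m.-1 <= mult u (smallest_index u) & 0 < mult u (smallest_index u + n)].
Proof.
rewrite inE => /and3P[/is_partitionP part /smallest_occurs_atleastP[s least le_m]].
by rewrite (smallest_indexE least) => /(largest_minus_smallestP _ least)[].
Qed.

Lemma mult_raise_smallest t : t \in A ->
  mult (raise_smallest t) =1
  move_part (mult t) (smallest_index t) (smallest_index t + n).
Proof.
case/memAP=> part least le_m.
have [raised_part _ _ _] := raise_smallest_part n_gt0 m_gt1 part least le_m.
exact: mult_of_mult.
Qed.

Lemma mult_lower_largest u : u \in B ->
  mult (lower_largest u) =1
  move_part (mult u) (smallest_index u + n) (smallest_index u).
Proof.
case/memBP=> part least le_m gsn_gt0.
have [lowered_part _ _] := lower_largest_part part least le_m gsn_gt0.
exact: mult_of_mult.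
Qed.

Lemma raise_smallest_spec t : t \in A ->
  [/\ raise_smallest t \in B & smallest_index (raise_smallest t) = smallest_index t].
Proof.
move=> tA; have E := mult_raise_smallest tA; have [part least le_m] := memAP tA.
have [raised_part raised_least le_m1 pos_sn] :=
  raise_smallest_part n_gt0 m_gt1 part least le_m.
have r_least := eq_least_pos (fsym E) raised_least.
split; last exact: smallest_indexE.
rewrite inE; apply/and3P; split; first exact: is_partition_of_mult.
  by apply/smallest_occurs_atleastP; exists (smallest_index t); rewrite ?E.
apply/(largest_minus_smallestP _ r_least); split=> [|l]; rewrite E //.
rewrite /move_part; case: (leqP l (smallest_index t + n)) => // ltl.
by rewrite mult_out; lia.
Qed.

Lemma lower_largest_spec u : u \in B ->
  [/\ lower_largest u \in A & smallest_index (lower_largest u) = smallest_index u].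
Proof.
move=> uB; have E := mult_lower_largest uB; have [part least le_m gsn_gt0] := memBP uB.
have [lowered_part lowered_least le_m'] :=
  lower_largest_part part least le_m gsn_gt0.
have l_least := eq_least_pos (fsym E) lowered_least.
split; last exact: smallest_indexE.
rewrite inE; apply/andP; split; first exact: is_partition_of_mult.
by apply/smallest_occurs_atleastP; exists (smallest_index u); rewrite ?E.
Qed.

Lemma raise_smallestK : {in A, cancel (@raise_smallest n) (@lower_largest n)}.
Proof.
move=> t tA; have [_ [ts_gt0 _] _] := memAP tA; have [rB r_idx] := raise_smallest_spec tA.
apply: mult_inj => k; rewrite mult_lower_largest // r_idx /move_part mult_raise_smallest //.
exact: move_partK.
Qed.

Lemma lower_largestK : {in B, cancel (@lower_largest n) (@raise_smallest n)}.
Proof.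
move=> u uB; have [_ _ _ pos_sn] := memBP uB; have [lA l_idx] := lower_largest_spec uB.
apply: mult_inj => k; rewrite mult_raise_smallest // l_idx /move_part mult_lower_largest //.
exact: move_partK.
Qed.

End Bijection.

Theorem proposition1p6 (n m : nat) (hn : 1 <= n) (hm : 2 <= m) :
  a_m m n = a_mk m.-1 n.*2 n.
Proof.
apply: (card_in_bij (f := @raise_smallest n) (g := @lower_largest n)).
- by move=> t /(raise_smallest_spec hn hm)[].
- by move=> u /lower_largest_spec[].
- exact: raise_smallestK.
- exact: lower_largestK.
Qed.
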